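(* There exist quaternary Hermitian LCD codes with parameters $[22,12,7]$, $[23,13,7]$, $[24,14,7]$ and $[25,15,7]$.
   Context: $\mathbb{F}_4=\{0,1,\omega,\omega^2\}$. A quaternary $[n,k,d]$ code is a $k$-dimensional subspace $C\subseteq\mathbb{F}_4^n$ with minimum nonzero Hamming weight $d$. The Hermitian inner product is $\langle x,y\rangle_H=\sum x_i y_i^2$ and $C^{\perp_H}$ is the corresponding dual; $C$ is Hermitian LCD if $C\cap C^{\perp_H}=\{0\}$. *)

From HB Require Import structures.
From mathcomp Require Import all_boot all_order all_algebra all_field.
Set Implicit Arguments. Unset Strict Implicit. Unset Printing Implicit Defensive.
Import GRing.Theory.
Local Open Scope ring_scope.

Section Codes.
Variable F : finFieldType.

Definition hwt (n : nat) (x : 'rV[F]_n) : nat := #|[set i : 'I_n | x 0 i != 0]|.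

(* Hermitian inner product <x,y>_H = sum_i x_i y_i^2 (y^2 is conjugation in F_4). *)
Definition hdot (n : nat) (x y : 'rV[F]_n) : F := \sum_(i < n) x 0 i * (y 0 i) ^+ 2.

Definition in_hdual (n : nat) (C : {vspace 'rV[F]_n}) (y : 'rV[F]_n) : Prop :=
  forall x, x \in C -> hdot x y = 0.

Definition is_nkd_code (n k d : nat) (C : {vspace 'rV[F]_n}) : Prop :=
  [/\ \dim C = k,
      (exists2 x, x \in C & (x != 0) && (hwt (n:=n) x == d))
    & forall x, x \in C -> x != 0 -> (d <= hwt (n:=n) x)%N].

Definition herm_LCD (n : nat) (C : {vspace 'rV[F]_n}) : Prop :=
  forall y, y \in C -> in_hdual C y -> y = 0.

Definition exists_herm_LCD_code (n k d : nat) : Prop :=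
  exists C : {vspace 'rV[F]_n}, @is_nkd_code n k d C /\ herm_LCD C.
End Codes.

From mathcomp Require Import all_boot all_order all_algebra all_field.
From mathcomp Require Import ring.
Set Implicit Arguments. Unset Strict Implicit. Unset Printing Implicit Defensive.
Import GRing.Theory.
Local Open Scope ring_scope.

(* Each code is generated by a systematic matrix [I_k | A_k], where A_k consists
   of the first k rows of one 15 x 10 matrix A over F_4.  The codes with k < 15
   are therefore shortenings of the [25,15] code and inherit its minimum weight,
   which is verified by enumerating the messages with at most 6 nonzero symbols
   (a message with 7 of them already yields a codeword of weight at least 7).
   A code with generator matrix G is Hermitian LCD as soon as its Gram matrix
   G G^H is invertible: if u G is Hermitian-orthogonal to every row of G, then
   G G^H applied to the conjugate of u vanishes.  Invertibility is certified by
   an explicit inverse.  All computations run on the model of F_4 as pairs of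
   booleans and are transported to an arbitrary field of order 4 along
   a + b ω |-> a + b w, where w is a root of X^2 + X + 1. *)

Section SystematicCodes.
Variable F : finFieldType.

Lemma hwtE n (x : 'rV[F]_n) : hwt x = (\sum_(i < n) (x 0%R i != 0%R))%N.
Proof. by rewrite /hwt -sum1_card big_mkcond; apply: eq_bigr => i _; rewrite inE; case: ifP. Qed.

Lemma hwt_eq0 n (x : 'rV[F]_n) : (hwt x == 0)%N = (x == 0).
Proof.
rewrite /hwt cards_eq0; apply/eqP/eqP => [x0 | ->].
  apply/rowP => i; rewrite mxE; apply/eqP; apply: contraFT (in_set0 i) => xi.
  by rewrite -x0 inE.
by apply/setP => i; rewrite !inE mxE eqxx.
Qed.

Lemma hwt_row_mx n1 n2 (x : 'rV[F]_n1) (y : 'rV[F]_n2) :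
  hwt (row_mx x y) = (hwt x + hwt y)%N.
Proof.
rewrite !hwtE big_split_ord; congr (_ + _)%N; apply: eq_bigr => i _.
  by rewrite row_mxEl.
by rewrite row_mxEr.
Qed.

Lemma hwt_delta_mx n (i : 'I_n) : hwt (delta_mx 0 i : 'rV[F]_n) = 1%N.
Proof.
rewrite hwtE (bigD1 i) //= big1 => [|j ji]; rewrite mxE ?eqxx ?oner_eq0 //.
by rewrite (negPf ji) andbF eqxx.
Qed.

Definition code_of_mx m n (G : 'M[F]_(m, n)) : {vspace 'rV[F]_n} :=
  limg (linfun (mulmxr G)).

Lemma code_of_mxP m n (G : 'M[F]_(m, n)) x :
  reflect (exists u, x = u *m G) (x \in code_of_mx G).
Proof.
apply: (iffP memv_imgP) => [[u _ ->] | [u ->]]; exists u; rewrite ?memvf //.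
  by rewrite lfunE.
by rewrite lfunE.
Qed.

Lemma dim_code_of_mx m n (G : 'M[F]_(m, n)) : row_free G -> \dim (code_of_mx G) = m.
Proof.
move=> freeG; rewrite limg_dim_eq ?dimvf /dim /= ?mul1n //.
have injG : injective (linfun (mulmxr G) : 'Hom('rV[F]_m, 'rV[F]_n)).
  by move=> u v; rewrite !lfunE; apply: (row_free_inj freeG).
by rewrite (eqP (introT lker0P injG)) capv0.
Qed.

Lemma row_free_sys k r (A : 'M[F]_(k, r)) : row_free (row_mx 1%:M A).
Proof. by apply/row_freeP; exists (col_mx 1%:M 0); rewrite mul_row_col mulmx1 mulmx0 addr0. Qed.

Lemma hwt_mul_sys k r (A : 'M[F]_(k, r)) u :
  hwt (u *m row_mx 1%:M A) = (hwt u + hwt (u *m A))%N.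
Proof. by rewrite mul_mx_row mulmx1 hwt_row_mx. Qed.

Definition sys_min_wt_ge d k r (A : 'M[F]_(k, r)) :=
  forall u : 'rV_k, u != 0 -> (d <= hwt u + hwt (u *m A))%N.

Lemma sys_min_wt_ge_usubmx d k1 k2 r (A : 'M[F]_(k1 + k2, r)) :
  sys_min_wt_ge d A -> sys_min_wt_ge d (usubmx A).
Proof.
move=> wtA u u_neq0; have := wtA (row_mx u 0).
rewrite row_mx_eq0 (negPf u_neq0) hwt_row_mx => /(_ isT).
have /eqP -> : hwt (0 : 'rV[F]_k2) == 0%N by rewrite hwt_eq0.
by rewrite -[in row_mx u 0 *m A](vsubmxK A) mul_row_col mul0mx addr0 addn0.
Qed.

Definition gram_mx m n (G : 'M[F]_(m, n)) : 'M[F]_m :=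
  G *m (map_mx (fun x => x ^+ 2) G)^T.

Lemma gram_mxE m n (G : 'M[F]_(m, n)) i j : gram_mx G i j = hdot (row i G) (row j G).
Proof. by rewrite !mxE; apply: eq_bigr => t _; rewrite !mxE. Qed.

Section Char2.
Hypothesis charF : 2 \in [pchar F].
Local Notation frob := (pFrobenius_aut charF).

Lemma map_mx_sqr m n (A : 'M[F]_(m, n)) : map_mx (fun x => x ^+ 2) A = map_mx frob A.
Proof. by apply: eq_map_mx => x; rewrite pFrobenius_autE. Qed.

Lemma hdot_row_mul m n (G : 'M[F]_(m, n)) u j :
  hdot (row j G) (u *m G) = (gram_mx G *m (map_mx frob u)^T) j 0.
Proof.
rewrite /gram_mx map_mx_sqr -mulmxA -trmx_mul -map_mxM /hdot mxE.
by apply: eq_bigr => t _; rewrite !mxE /= pFrobenius_autE.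
Qed.

Lemma herm_LCD_code_of_mx m n (G : 'M[F]_(m, n)) :
  gram_mx G \in unitmx -> herm_LCD (code_of_mx G).
Proof.
move=> Gunit _ /code_of_mxP [u ->] u_perp.
have : gram_mx G *m (map_mx frob u)^T = 0.
  apply/colP => j; rewrite -hdot_row_mul mxE; apply: u_perp.
  by apply/code_of_mxP; exists (delta_mx 0 j); rewrite -rowE.
move/(congr1 (mulmx (invmx (gram_mx G)))); rewrite mulKmx // mulmx0 => /eqP.
by rewrite trmx_eq0 map_mx_eq0 => /eqP ->; rewrite mul0mx.
Qed.

Lemma exists_herm_LCD_sys d k r (A : 'M[F]_(k, r)) :
  gram_mx (row_mx 1%:M A) \in unitmx -> sys_min_wt_ge d A ->
  (exists2 u : 'rV_k, u != 0 & (hwt u + hwt (u *m A))%N = d) ->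
  exists_herm_LCD_code F (k + r) k d.
Proof.
move=> Gunit wtA [u0 u0_neq0 wt_u0].
exists (code_of_mx (row_mx 1%:M A)); split; last exact: herm_LCD_code_of_mx.
split; first exact/dim_code_of_mx/row_free_sys.
  exists (u0 *m row_mx 1%:M A); first by apply/code_of_mxP; exists u0.
  by rewrite hwt_mul_sys wt_u0 eqxx mul_mx_row mulmx1 row_mx_eq0 (negPf u0_neq0).
move=> _ /code_of_mxP [u ->]; rewrite hwt_mul_sys => uG_neq0; apply: wtA.
by apply: contraNneq uG_neq0 => ->; rewrite mul0mx.
Qed.

End Char2.
End SystematicCodes.

Section FieldOfOrderFour.
Variables (F : finFieldType) (cardF : #|F| = 4%N).

Lemma card4_pchar2 : 2 \in [pchar F].
Proof. exact: (card_finPcharP (p := 2) (n := 2) cardF). Qed.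

Lemma card4_omega : exists w : F, w ^+ 2 = w + 1.
Proof.
have /subsetPn [w _] : ~~ ([set: F] \subset [set 0; 1]).
  by apply/negP => /subset_leq_card; rewrite cardsT cardF cards2; case: (_ != _).
rewrite !inE negb_or => /andP [w_neq0 w_neq1]; exists w.
have w3 : w ^+ 3 = 1.
  by apply: (mulfI w_neq0); rewrite -exprS -cardF expf_card mulr1.
have : (w - 1) * (w ^+ 2 + (w + 1)) = w ^+ 3 - 1 by ring.
move/eqP; rewrite w3 subrr mulf_eq0 subr_eq0 (negPf w_neq1) addr_eq0 => /eqP ->.
exact: (oppr_pchar2 card4_pchar2).
Qed.

End FieldOfOrderFour.

(* The pair (a, b) stands for a + b ω, where ω ^ 2 = ω + 1. *)
Definition gf4 := (bool * bool)%type.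
Local Notation seqmx := (seq (seq gf4)).

Definition gf4_0 : gf4 := (false, false).
Definition gf4_nz (x : gf4) : bool := x.1 || x.2.
Definition gf4_add (x y : gf4) : gf4 := (x.1 (+) y.1, x.2 (+) y.2).
Definition gf4_sqr (x : gf4) : gf4 := (x.1 (+) x.2, x.2).
Definition gf4_mul (c x : gf4) : gf4 :=
  match c with
  | (false, false) => gf4_0
  | (true, false) => x
  | (false, true) => (x.2, x.1 (+) x.2)
  | (true, true) => (x.1 (+) x.2, x.1)
  end.
Definition gf4_units : seq gf4 := [:: (true, false); (false, true); (true, true)].

Lemma gf4_mulE x y :
  gf4_mul x y = ((x.1 && y.1) (+) (x.2 && y.2), (x.1 && y.2) (+) (x.2 && y.1) (+) (x.2 && y.2)).
Proof. by case: x y => [[] []] [[] []]. Qed.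

Lemma gf4_add0l x : gf4_add gf4_0 x = x.
Proof. by case: x => [[] []]. Qed.

Lemma gf4_add0r x : gf4_add x gf4_0 = x.
Proof. by case: x => [[] []]. Qed.

Lemma gf4_unit x : gf4_nz x -> x \in gf4_units.
Proof. by case: x => [[] []]. Qed.

(* Tables of field elements are written with the digits 0, 1, 2, 3 for 0, 1, ω, ω^2. *)
Definition gf4_of_nat (n : nat) : gf4 := (odd n, odd n./2).
Definition gf4_table : seq (seq nat) -> seqmx := map (map gf4_of_nat).

Fixpoint vadd (a b : seq gf4) : seq gf4 :=
  match a, b with
  | x :: a', y :: b' => gf4_add x y :: vadd a' b'
  | [::], _ => b
  | _, [::] => a
  end.

Definition vscale (c : gf4) (a : seq gf4) : seq gf4 := map (gf4_mul c) a.

Definition vaxpy (c : gf4) (a acc : seq gf4) : seq gf4 :=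
  if gf4_nz c then vadd (vscale c a) acc else acc.

Fixpoint lincomb_from (acc u : seq gf4) (rows : seqmx) : seq gf4 :=
  match u, rows with
  | c :: u', a :: rows' => lincomb_from (vaxpy c a acc) u' rows'
  | _, _ => acc
  end.

Definition lincomb (u : seq gf4) (rows : seqmx) : seq gf4 := lincomb_from [::] u rows.

Definition hwt_seq (a : seq gf4) : nat := count gf4_nz a.

Lemma nth_vadd a b j : nth gf4_0 (vadd a b) j = gf4_add (nth gf4_0 a j) (nth gf4_0 b j).
Proof. by elim: a b j => [|x a IH] [|y b] [|j] //=; rewrite ?gf4_add0l ?gf4_add0r. Qed.

Lemma nth_vscale c a j : nth gf4_0 (vscale c a) j = gf4_mul c (nth gf4_0 a j).
Proof. by elim: a j => [|x a IH] [|j] //=; case: c => [[] []]. Qed.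

Lemma size_vadd a b : size (vadd a b) = maxn (size a) (size b).
Proof. by elim: a b => [|x a IH] [|y b] //=; rewrite ?IH ?maxnSS ?max0n ?maxn0. Qed.

Lemma size_vaxpy c a acc : (size (vaxpy c a acc) <= maxn (size a) (size acc))%N.
Proof. by rewrite /vaxpy; case: ifP => _; rewrite ?leq_maxr // size_vadd size_map. Qed.

Lemma size_lincomb_from r acc u rows :
  {in rows, forall a, size a <= r}%N -> (size acc <= r)%N ->
  (size (lincomb_from acc u rows) <= r)%N.
Proof.
elim: u rows acc => [|c u IH] [|a rows] acc //= le_rows le_acc.
apply: IH => [b b_in|]; first by apply: le_rows; rewrite inE b_in orbT.
by rewrite (leq_trans (size_vaxpy c a acc)) // geq_max le_acc le_rows ?mem_head.
Qed.

(* [m] counts the nonzero coefficients chosen so far; once [d <= m.+1], any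
   further nonzero coefficient gives a message, hence a codeword, of weight at
   least [d], so only the all-zero continuation remains to be explored.  The
   nested conditionals keep the search lazy under call-by-value evaluation. *)
Fixpoint wt_check (d : nat) (rows : seqmx) (acc : seq gf4) (m : nat) : bool :=
  match rows with
  | [::] => (m == 0) || (d <= m + hwt_seq acc)%N
  | a :: rows' =>
      if wt_check d rows' acc m then
        if (d <= m.+1)%N then true
        else all (fun c => wt_check d rows' (vaxpy c a acc) m.+1) gf4_units
      else false
  end.

Lemma wt_checkP d rows acc m u :
  wt_check d rows acc m -> size u = size rows ->
  (m + hwt_seq u == 0)%N || (d <= m + hwt_seq u + hwt_seq (lincomb_from acc u rows))%N.
Proof.
elim: rows acc m u => [|a rows IH] acc m [|c u] //; first by rewrite /hwt_seq addn0.
rewrite [wt_check _ _ _ _]/= [lincomb_from _ _ _]/= => ok [size_u].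
have ok0 : wt_check d rows acc m by move: ok; case: wt_check.
have wt_cons : hwt_seq (c :: u) = (gf4_nz c + hwt_seq u)%N by [].
have [c_nz|c0] := boolP (gf4_nz c); last first.
  by rewrite wt_cons /vaxpy (negPf c0) add0n; apply: IH.
rewrite wt_cons c_nz add1n addnS.
have [le_dm|lt_md] := leqP d m.+1.
  by apply/orP; right; rewrite (leq_trans le_dm) // addSn ltnS -addnA leq_addr.
have ok_units : all (fun c => wt_check d rows (vaxpy c a acc) m.+1) gf4_units.
  by move: ok; rewrite ok0 leqNgt lt_md.
by have := IH _ _ u (allP ok_units c (gf4_unit c_nz)) size_u; rewrite addSn.
Qed.

Lemma wt_check_lincomb d rows u :
  wt_check d rows [::] 0 -> size u = size rows -> (0 < hwt_seq u)%N ->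
  (d <= hwt_seq u + hwt_seq (lincomb u rows))%N.
Proof.
move=> ok size_u wt_u; have /orP [|//] := wt_checkP ok size_u.
by rewrite add0n eqn0Ngt wt_u.
Qed.

Fixpoint hdot_seq (a b : seq gf4) : gf4 :=
  match a, b with
  | x :: a', y :: b' => gf4_add (gf4_mul x (gf4_sqr y)) (hdot_seq a' b')
  | _, _ => gf4_0
  end.

Definition gramseqmx (G : seqmx) : seqmx := [seq [seq hdot_seq x y | y <- G] | x <- G].

Definition mulseqmx (M B : seqmx) : seqmx := [seq lincomb u B | u <- M].

Definition delta_seq (k i : nat) : seq gf4 := [seq (j == i, false) | j <- iota 0 k].

Definition seqmx1 (k : nat) : seqmx := [seq delta_seq k i | i <- iota 0 k].

Definition sysseqmx (k : nat) (rows : seqmx) : seqmx :=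
  [seq delta_seq k i ++ nth [::] rows i | i <- iota 0 k].

Definition shaped (m n : nat) (s : seqmx) : bool :=
  (size s == m) && all (fun a => size a == n) s.

Lemma shaped_nth m n s i : shaped m n s -> (i < m)%N -> size (nth [::] s i) = n.
Proof. by case/andP => /eqP size_s /allP sizes lt_im; apply/eqP/sizes/mem_nth; rewrite size_s. Qed.

Lemma shaped_sysseqmx k r rows : shaped k r rows -> shaped k (k + r) (sysseqmx k rows).
Proof.
move=> sh; rewrite /shaped size_map size_iota eqxx all_map; apply/allP => i.
by rewrite mem_iota add0n /= size_cat size_map size_iota => /(shaped_nth sh) ->.
Qed.

Section Gf4Embedding.
Variables (F : finFieldType) (charF : 2 \in [pchar F]) (w : F).
Hypothesis w_root : w ^+ 2 = w + 1.

Definition gf4_val (x : gf4) : F := x.1%:R + x.2%:R * w.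

Lemma gf4_val0 : gf4_val gf4_0 = 0.
Proof. by rewrite /gf4_val mul0r addr0. Qed.

Lemma natr_addb (a b : bool) : (a (+) b)%:R = a%:R + b%:R :> F.
Proof. by case: a b => [] []; rewrite ?addr0 ?add0r // -natrD (pcharf0 charF). Qed.

Lemma natr_andb (a b : bool) : (a && b)%:R = a%:R * b%:R :> F.
Proof. by rewrite -mulnb natrM. Qed.

Lemma sqr_natr_bool (a : bool) : a%:R ^+ 2 = a%:R :> F.
Proof. by case: a; rewrite ?expr1n ?expr0n. Qed.

Lemma gf4_valD x y : gf4_val (gf4_add x y) = gf4_val x + gf4_val y.
Proof. by rewrite /gf4_val /= !natr_addb; ring. Qed.

Lemma gf4_valM x y : gf4_val (gf4_mul x y) = gf4_val x * gf4_val y.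
Proof.
rewrite /gf4_val gf4_mulE /= !natr_addb !natr_andb.
have -> : (x.1%:R + x.2%:R * w) * (y.1%:R + y.2%:R * w) =
  x.1%:R * y.1%:R + (x.1%:R * y.2%:R + x.2%:R * y.1%:R) * w + x.2%:R * y.2%:R * w ^+ 2 :> F.
  by ring.
by rewrite w_root; ring.
Qed.

Lemma gf4_val_sqr x : gf4_val (gf4_sqr x) = gf4_val x ^+ 2.
Proof.
rewrite -(pFrobenius_autE charF) rmorphD rmorphM /= !pFrobenius_autE.
by rewrite w_root !sqr_natr_bool /gf4_val /= natr_addb; ring.
Qed.

Lemma omega_neq0 : w != 0.
Proof. by apply: contra_eq_neq w_root => ->; rewrite expr0n add0r eq_sym oner_eq0. Qed.

Lemma gf4_val_eq0 x : (gf4_val x == 0) = ~~ gf4_nz x.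
Proof.
case: x => [[] []]; rewrite /gf4_val /= ?mul1r ?mul0r ?addr0 ?add0r ?eqxx ?oner_eq0 //.
  by rewrite addrC -w_root expf_eq0 (negPf omega_neq0) andbF.
by rewrite (negPf omega_neq0).
Qed.

Lemma gf4_val_inj : injective gf4_val.
Proof.
move=> x y /eqP; rewrite -subr_eq0 (oppr_pchar2 charF) -gf4_valD gf4_val_eq0.
by case: x y => [[] []] [[] []].
Qed.

Definition gf4_mx m n (s : seqmx) : 'M[F]_(m, n) :=
  \matrix_(i, j) gf4_val (nth gf4_0 (nth [::] s i) j).

Definition gf4_rv n (a : seq gf4) : 'rV[F]_n := \row_j gf4_val (nth gf4_0 a j).

Lemma row_gf4_mx m n s i : row i (gf4_mx m n s) = gf4_rv n (nth [::] s i).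
Proof. by apply/rowP => j; rewrite !mxE. Qed.

Lemma gf4_mx_take k1 k2 n s : usubmx (gf4_mx (k1 + k2) n s) = gf4_mx k1 n (take k1 s).
Proof. by apply/matrixP => i j; rewrite !mxE nth_take. Qed.

Lemma hwt_gf4_rv n a : (size a <= n)%N -> hwt (gf4_rv n a) = hwt_seq a.
Proof.
move=> le_an; rewrite hwtE /hwt_seq -sum1_count (big_nth gf4_0) big_mkord.
rewrite (big_ord_widen_cond _ (fun i => gf4_nz (nth gf4_0 a i)) (fun=> 1%N) le_an).
rewrite [RHS]big_mkcond; apply: eq_bigr => i _.
rewrite mxE gf4_val_eq0 negbK; case: ltnP => [_ | le_ai]; first by rewrite andbT.
by rewrite nth_default.
Qed.

Lemma gf4_rv_onto (cardF : #|F| = 4%N) k (u : 'rV[F]_k) : exists2 a, size a = k & u = gf4_rv k a.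
Proof.
have onto x : x \in codom gf4_val.
  by apply: (inj_card_onto gf4_val_inj); rewrite card_prod card_bool cardF.
exists [seq iinv (onto (u 0 j)) | j <- enum 'I_k]; first by rewrite size_map size_enum_ord.
by apply/rowP => j; rewrite mxE (nth_map j) ?size_enum_ord // nth_ord_enum f_iinv.
Qed.

Lemma gf4_val_nth_vaxpy c a acc j :
  gf4_val (nth gf4_0 (vaxpy c a acc) j) =
  gf4_val c * gf4_val (nth gf4_0 a j) + gf4_val (nth gf4_0 acc j).
Proof.
rewrite /vaxpy; case: ifP => [_ | c0]; first by rewrite nth_vadd gf4_valD nth_vscale gf4_valM.
have /eqP -> : gf4_val c == 0 by rewrite gf4_val_eq0 c0.
by rewrite mul0r add0r.
Qed.

Lemma gf4_val_nth_lincomb_from acc u rows j :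
  gf4_val (nth gf4_0 (lincomb_from acc u rows) j) = gf4_val (nth gf4_0 acc j) +
    \sum_(t < size u) gf4_val (nth gf4_0 u t) * gf4_val (nth gf4_0 (nth [::] rows t) j).
Proof.
elim: u rows acc => [|c u IH] [|a rows] acc /=; rewrite ?big_ord0 ?addr0 //.
  by rewrite big1 ?addr0 // => t _; rewrite !nth_nil gf4_val0 mulr0.
rewrite IH big_ord_recl gf4_val_nth_vaxpy -addrA [in RHS]addrCA.
by congr (_ + (_ + _)); apply: eq_bigr => t _; rewrite lift0.
Qed.

Lemma gf4_rv_lincomb k n u rows :
  size u = k -> gf4_rv n (lincomb u rows) = gf4_rv k u *m gf4_mx k n rows.
Proof.
move=> <-; apply/rowP => j; rewrite !mxE gf4_val_nth_lincomb_from nth_nil gf4_val0 add0r.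
by apply: eq_bigr => t _; rewrite !mxE.
Qed.

Lemma gf4_mx_mulseqmx m k n M B :
  shaped m k M -> gf4_mx m n (mulseqmx M B) = gf4_mx m k M *m gf4_mx k n B.
Proof.
move=> shM; have /andP [/eqP size_M _] := shM; apply/row_matrixP => i.
rewrite row_mul !row_gf4_mx (nth_map [::]) ?size_M //.
exact/gf4_rv_lincomb/(shaped_nth shM).
Qed.

Lemma gf4_val_hdot_seq a b :
  size a = size b ->
  gf4_val (hdot_seq a b) =
    \sum_(t < size a) gf4_val (nth gf4_0 a t) * gf4_val (nth gf4_0 b t) ^+ 2.
Proof.
elim: a b => [|x a IH] [|y b] //= => [_|[size_ab]]; first by rewrite big_ord0 gf4_val0.
by rewrite big_ord_recl gf4_valD gf4_valM gf4_val_sqr IH.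
Qed.

Lemma gf4_mx_gramseqmx m n G : shaped m n G -> gf4_mx m m (gramseqmx G) = gram_mx (gf4_mx m n G).
Proof.
move=> shG; have /andP [/eqP size_G _] := shG; apply/matrixP => i j.
rewrite gram_mxE !row_gf4_mx mxE !(nth_map [::]) ?size_G //.
rewrite gf4_val_hdot_seq ?(shaped_nth shG) //.
by apply: eq_bigr => t _; rewrite !mxE.
Qed.

Lemma gf4_val_nth_delta_seq k i j :
  (j < k)%N -> gf4_val (nth gf4_0 (delta_seq k i) j) = (i == j)%:R.
Proof. by move=> lt_jk; rewrite (nth_map 0%N) ?size_iota // nth_iota // /gf4_val mul0r addr0 eq_sym. Qed.

Lemma gf4_mx_seqmx1 k : gf4_mx k k (seqmx1 k) = 1%:M.
Proof.
apply/matrixP => i j; rewrite !mxE (nth_map 0%N) ?size_iota // nth_iota //.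
by rewrite gf4_val_nth_delta_seq.
Qed.

Lemma gf4_mx_sysseqmx k r rows :
  gf4_mx k (k + r) (sysseqmx k rows) = row_mx 1%:M (gf4_mx k r rows).
Proof.
apply/matrixP => i j; rewrite !mxE (nth_map 0%N) ?size_iota // nth_iota //.
case: splitP => j' ->; rewrite ?mxE nth_cat size_map size_iota.
  by rewrite ltn_ord gf4_val_nth_delta_seq.
by rewrite ltnNge leq_addr addKn.
Qed.

Lemma sys_min_wt_ge_of_wt_check (cardF : #|F| = 4%N) d k r rows :
  shaped k r rows -> wt_check d rows [::] 0 -> sys_min_wt_ge d (gf4_mx k r rows).
Proof.
move=> shA ok u; have /andP [/eqP size_A /allP sizes] := shA.
have [a size_a -> a_neq0] := gf4_rv_onto cardF u.
have le_lincomb : (size (lincomb a rows) <= r)%N.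
  by apply: size_lincomb_from => // b /sizes/eqP ->.
rewrite -gf4_rv_lincomb // !hwt_gf4_rv ?size_a //.
apply: wt_check_lincomb => //; first by rewrite size_a size_A.
by rewrite -(hwt_gf4_rv (n := k)) ?size_a // lt0n hwt_eq0.
Qed.

Lemma exists_herm_LCD_of_seqmx d k r (rows N : seqmx) i :
  sys_min_wt_ge d (gf4_mx k r rows) ->
  shaped k r rows -> shaped k k N -> mulseqmx N (gramseqmx (sysseqmx k rows)) = seqmx1 k ->
  (i < k)%N -> (hwt_seq (nth [::] rows i)).+1 = d ->
  exists_herm_LCD_code F (k + r) k d.
Proof.
move=> wtA shA shN invN lt_ik wt_i; apply: (exists_herm_LCD_sys charF) wtA _.
  have invG : gf4_mx k k N *m gram_mx (row_mx 1%:M (gf4_mx k r rows)) = 1%:M.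
    rewrite -gf4_mx_sysseqmx -gf4_mx_gramseqmx ?shaped_sysseqmx //.
    by rewrite -gf4_mx_mulseqmx // invN gf4_mx_seqmx1.
  by case: (mulmx1_unit invG).
exists (delta_mx 0 (Ordinal lt_ik)); first by rewrite -hwt_eq0 hwt_delta_mx.
by rewrite -rowE row_gf4_mx hwt_delta_mx hwt_gf4_rv ?(shaped_nth shA) ?add1n.
Qed.

End Gf4Embedding.

Definition A15 : seqmx := gf4_table
  [:: [:: 2; 2; 1; 3; 2; 1; 2; 3; 3; 0];
      [:: 3; 2; 2; 1; 3; 0; 1; 2; 3; 3];
      [:: 1; 3; 2; 2; 1; 1; 0; 1; 2; 3];
      [:: 2; 1; 3; 2; 2; 1; 1; 0; 1; 2];
      [:: 3; 2; 1; 3; 2; 3; 1; 1; 0; 1];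
      [:: 2; 0; 2; 2; 0; 2; 0; 0; 1; 1];
      [:: 0; 2; 0; 2; 2; 2; 2; 0; 0; 1];
      [:: 3; 0; 2; 0; 2; 2; 2; 2; 0; 0];
      [:: 3; 3; 0; 2; 0; 0; 2; 2; 2; 0];
      [:: 0; 3; 3; 0; 2; 0; 0; 2; 2; 2];
      [:: 0; 0; 3; 2; 3; 2; 0; 1; 2; 3];
      [:: 3; 1; 0; 0; 3; 3; 1; 2; 0; 1];
      [:: 1; 0; 0; 3; 2; 1; 2; 0; 1; 2];
      [:: 0; 3; 2; 3; 0; 0; 1; 2; 3; 1];
      [:: 3; 2; 3; 0; 0; 1; 2; 3; 1; 0]].

(* [Nk] is the inverse of the Gram matrix of [I_k | take k A15]. *)
Definition N12 : seqmx := gf4_table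
  [:: [:: 1; 0; 1; 3; 0; 2; 3; 3; 0; 0; 3; 2];
      [:: 0; 1; 0; 1; 3; 3; 0; 0; 3; 1; 2; 1];
      [:: 1; 0; 1; 0; 1; 0; 2; 2; 0; 0; 1; 3];
      [:: 2; 1; 0; 1; 0; 1; 3; 3; 2; 2; 3; 2];
      [:: 0; 2; 1; 0; 1; 0; 3; 0; 3; 3; 2; 1];
      [:: 3; 2; 0; 1; 0; 1; 1; 1; 3; 3; 3; 1];
      [:: 2; 0; 3; 2; 2; 1; 0; 0; 3; 2; 2; 0];
      [:: 2; 0; 3; 2; 0; 1; 0; 1; 3; 3; 3; 3];
      [:: 0; 2; 0; 3; 2; 2; 2; 2; 1; 0; 2; 2];
      [:: 0; 1; 0; 3; 2; 2; 3; 2; 0; 0; 0; 3];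
      [:: 2; 3; 1; 2; 3; 2; 3; 2; 3; 0; 1; 0];
      [:: 3; 1; 2; 3; 1; 1; 0; 2; 3; 2; 0; 1]].

Definition N13 : seqmx := gf4_table
  [:: [:: 0; 2; 2; 2; 2; 1; 3; 2; 1; 0; 0; 0; 1];
      [:: 3; 0; 2; 2; 2; 1; 0; 3; 0; 1; 0; 0; 3];
      [:: 3; 3; 0; 2; 2; 1; 2; 0; 2; 0; 0; 0; 2];
      [:: 3; 3; 3; 0; 2; 2; 3; 2; 3; 2; 0; 0; 1];
      [:: 3; 3; 3; 3; 0; 2; 3; 3; 0; 3; 0; 0; 3];
      [:: 1; 1; 1; 3; 3; 0; 1; 3; 1; 3; 2; 2; 2];
      [:: 2; 0; 3; 2; 2; 1; 0; 0; 3; 2; 2; 0; 0];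
      [:: 3; 2; 0; 3; 2; 2; 0; 0; 2; 3; 0; 1; 1];
      [:: 1; 0; 3; 2; 0; 1; 2; 3; 0; 0; 1; 0; 1];
      [:: 0; 1; 0; 3; 2; 2; 3; 2; 0; 0; 0; 3; 0];
      [:: 0; 0; 0; 0; 0; 3; 3; 0; 1; 0; 0; 3; 2];
      [:: 0; 0; 0; 0; 0; 3; 0; 1; 0; 2; 2; 0; 3];
      [:: 1; 2; 3; 1; 2; 3; 0; 1; 1; 0; 3; 2; 1]].

Definition N14 : seqmx := gf4_table
  [:: [:: 1; 0; 1; 3; 0; 2; 2; 3; 2; 2; 0; 2; 0; 2];
      [:: 0; 1; 0; 1; 3; 3; 3; 0; 2; 0; 0; 1; 0; 1];
      [:: 1; 0; 1; 0; 1; 0; 0; 2; 3; 3; 0; 3; 0; 3];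
      [:: 2; 1; 0; 1; 0; 1; 2; 3; 0; 0; 0; 2; 0; 2];
      [:: 0; 2; 1; 0; 1; 0; 0; 0; 2; 2; 0; 1; 0; 1];
      [:: 3; 2; 0; 1; 0; 1; 3; 1; 0; 0; 2; 1; 0; 3];
      [:: 3; 2; 0; 3; 0; 2; 1; 1; 0; 0; 2; 2; 1; 2];
      [:: 2; 0; 3; 2; 0; 1; 1; 1; 1; 1; 0; 3; 0; 2];
      [:: 3; 3; 2; 0; 3; 0; 0; 1; 1; 3; 1; 3; 3; 3];
      [:: 3; 0; 2; 0; 3; 0; 0; 1; 2; 1; 0; 2; 3; 1];
      [:: 0; 0; 0; 0; 0; 3; 3; 0; 1; 0; 0; 3; 2; 0];
      [:: 3; 1; 2; 3; 1; 1; 3; 2; 2; 3; 2; 1; 0; 1];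
      [:: 0; 0; 0; 0; 0; 0; 1; 0; 2; 2; 3; 0; 0; 2];
      [:: 3; 1; 2; 3; 1; 2; 3; 3; 2; 1; 0; 1; 3; 1]].

Definition N15 : seqmx := gf4_table
  [:: [:: 0; 2; 2; 2; 2; 1; 1; 1; 3; 3; 3; 2; 1; 2; 1];
      [:: 3; 0; 2; 2; 2; 1; 1; 1; 1; 3; 2; 1; 3; 1; 3];
      [:: 3; 3; 0; 2; 2; 1; 1; 1; 1; 1; 1; 3; 2; 3; 2];
      [:: 3; 3; 3; 0; 2; 2; 1; 1; 1; 1; 3; 2; 1; 2; 1];
      [:: 3; 3; 3; 3; 0; 2; 2; 1; 1; 1; 2; 1; 3; 1; 3];
      [:: 1; 1; 1; 3; 3; 0; 2; 2; 2; 2; 3; 1; 2; 3; 2];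
      [:: 1; 1; 1; 1; 3; 3; 0; 2; 2; 2; 3; 2; 3; 2; 2];
      [:: 1; 1; 1; 1; 1; 3; 3; 0; 2; 2; 2; 3; 3; 2; 3];
      [:: 2; 1; 1; 1; 1; 3; 3; 3; 0; 2; 2; 3; 2; 3; 1];
      [:: 2; 2; 1; 1; 1; 3; 3; 3; 3; 0; 3; 2; 2; 1; 1];
      [:: 2; 3; 1; 2; 3; 2; 2; 3; 3; 2; 1; 3; 0; 0; 2];
      [:: 3; 1; 2; 3; 1; 1; 3; 2; 2; 3; 2; 1; 0; 1; 0];
      [:: 1; 2; 3; 1; 2; 3; 2; 2; 3; 3; 0; 0; 1; 2; 1];
      [:: 3; 1; 2; 3; 1; 2; 3; 3; 2; 1; 0; 1; 3; 1; 0];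
      [:: 1; 2; 3; 1; 2; 3; 3; 2; 1; 1; 3; 0; 1; 0; 1]].

Theorem lemma6p1 (F : finFieldType) (hF : #|F| = 4%N) :
  [/\ exists_herm_LCD_code F 22 12 7,
      exists_herm_LCD_code F 23 13 7,
      exists_herm_LCD_code F 24 14 7
    & exists_herm_LCD_code F 25 15 7].
Proof.
have charF := card4_pchar2 hF.
have [w w_root] := card4_omega hF.
have wt15 : sys_min_wt_ge 7 (gf4_mx w 15 10 A15).
  by apply: (sys_min_wt_ge_of_wt_check charF w_root hF); vm_compute.
have wt12 : sys_min_wt_ge 7 (gf4_mx w 12 10 (take 12 A15)).
  by rewrite -(gf4_mx_take w 12 3); apply: sys_min_wt_ge_usubmx.
have wt13 : sys_min_wt_ge 7 (gf4_mx w 13 10 (take 13 A15)).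
  by rewrite -(gf4_mx_take w 13 2); apply: sys_min_wt_ge_usubmx.
have wt14 : sys_min_wt_ge 7 (gf4_mx w 14 10 (take 14 A15)).
  by rewrite -(gf4_mx_take w 14 1); apply: sys_min_wt_ge_usubmx.
split.
- by apply: (exists_herm_LCD_of_seqmx charF w_root (N := N12) (i := 5) wt12); vm_compute.
- by apply: (exists_herm_LCD_of_seqmx charF w_root (N := N13) (i := 5) wt13); vm_compute.
- by apply: (exists_herm_LCD_of_seqmx charF w_root (N := N14) (i := 5) wt14); vm_compute.
- by apply: (exists_herm_LCD_of_seqmx charF w_root (N := N15) (i := 5) wt15); vm_compute.
Qed.
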